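(* Let $\sigma$ be a nonempty finite sequence of nonnegative integers avoiding both $010$ and $110$. Let $q$ be the largest value occurring at least twice in $\sigma$, or $q=0$ if there is none, and let $r$ be the number of distinct values of $\sigma$ that are $\geqslant q$. Then $\mathrm{forb}(\sigma,\{010,110\})=q+r$.
   Context: A sequence contains a pattern $p$ if some subsequence is order-isomorphic to $p$; otherwise it avoids $p$. Avoiding $010$: no $i<j<l$ with $\sigma_i=\sigma_l<\sigma_j$. Avoiding $110$: no $i<j<l$ with $\sigma_i=\sigma_j>\sigma_l$. For a sequence $\sigma$ avoiding a set of patterns $P$, a value $v\in\{0,\dots,\max(\sigma)\}$ is forbidden if the sequence $\sigma$ followed by $M$ and then $v$ contains some pattern of $P$, where $M>\max(\sigma)$; $\mathrm{forb}(\sigma,P)$ is the number of forbidden values. *)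

From mathcomp Require Import all_boot.
Set Implicit Arguments. Unset Strict Implicit. Unset Printing Implicit Defensive.

Definition order_iso (s p : seq nat) : bool :=
  (size s == size p) &&
  all (fun i => all (fun j =>
     ((nth 0 s i < nth 0 s j) == (nth 0 p i < nth 0 p j)) &&
     ((nth 0 s i == nth 0 s j) == (nth 0 p i == nth 0 p j)))
     (iota 0 (size s))) (iota 0 (size s)).

Fixpoint subseqs (s : seq nat) : seq (seq nat) :=
  match s with
  | [::] => [:: [::]]
  | x :: s' => let r := subseqs s' in [seq x :: t | t <- r] ++ r
  end.

Definition contains (s p : seq nat) : bool :=
  has (fun t => order_iso t p) (subseqs s).

Definition avoids (s p : seq nat) : bool := ~~ contains s p.

Definition maxs (s : seq nat) : nat := \max_(x <- s) x.

Definition forbidden (P : seq (seq nat)) (s : seq nat) (v : nat) : bool :=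
  has (contains (rcons (rcons s (maxs s).+1) v)) P.

Definition forb (s : seq nat) (P : seq (seq nat)) : nat :=
  count (forbidden P s) (iota 0 (maxs s).+1).

From mathcomp Require Import all_boot zify.
Set Implicit Arguments. Unset Strict Implicit. Unset Printing Implicit Defensive.

(* Appending a value M above everything in [s] creates a peak.  Since [s] avoids
   010 and 110, an occurrence of either pattern in [s ++ [:: M; v]] must end at
   [v], and M can only play the middle 1 of 010.  So [v] is forbidden exactly
   when [v M v] is a 010 (i.e. [v] occurs in [s]) or [a a v] is a 110 for some
   repeated value [a > v] (i.e. [v < q]).  The forbidden values are therefore
   [0, ..., q-1] together with the values of [s] that are at least [q]. *)

Lemma order_iso_010 a b c : order_iso [:: a; b; c] [:: 0; 1; 0] = (a == c) && (a < b).
Proof.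
rewrite /order_iso /= !ltnn !eqxx /=.
by case: (ltngtP a b); case: (ltngtP a c); case: (ltngtP b c) => //=; lia.
Qed.

Lemma order_iso_110 a b c : order_iso [:: a; b; c] [:: 1; 1; 0] = (a == b) && (c < a).
Proof.
rewrite /order_iso /= !ltnn !eqxx /=.
by case: (ltngtP a b); case: (ltngtP a c); case: (ltngtP b c) => //=; lia.
Qed.

Lemma order_iso_size t p : order_iso t p -> size t = size p.
Proof. by case/andP => /eqP. Qed.

Lemma leq_maxs a s : a \in s -> a <= maxs s.
Proof. by move=> /leq_bigmax_seq; apply. Qed.

Lemma mem_subseqs_nil s : [::] \in subseqs s.
Proof. by elim: s => //= x s IH; rewrite mem_cat IH orbT. Qed.

Lemma mem_subseqs_cat s1 s2 t : t \in subseqs (s1 ++ s2) <->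
  exists t1 t2, [/\ t1 \in subseqs s1, t2 \in subseqs s2 & t = t1 ++ t2].
Proof.
elim: s1 t => [|x s1 IH] t /=.
  split=> [t_s2|[_ [t2 [/[!inE] /eqP -> t2_s2 ->]]]] //.
  by exists [::], t.
rewrite mem_cat; split.
- case/orP => [/mapP [u /IH [t1 [t2 [t1_s1 t2_s2 ->]]] ->]|/IH [t1 [t2 [t1_s1 t2_s2 ->]]]].
    exists (x :: t1), t2; split=> //.
    by rewrite mem_cat; apply/orP; left; apply/mapP; exists t1.
  by exists t1, t2; rewrite mem_cat t1_s1 orbT.
- case=> t1 [t2 [/[!mem_cat] /orP [/mapP [u u_s1 ->]|t1_s1] t2_s2 ->]].
    by apply/orP; left; apply/mapP; exists (u ++ t2) => //; apply/IH; exists u, t2.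
  by apply/orP; right; apply/IH; exists t1, t2.
Qed.

Lemma mem_subseqs_sub s t : t \in subseqs s -> {subset t <= s}.
Proof.
elim: s t => [|x s IH] t /=; first by rewrite inE => /eqP ->.
rewrite mem_cat => /orP [/mapP [u /IH u_s ->] y|/IH t_s y /t_s ys]; rewrite !inE.
  by case/orP => [-> //|/u_s ->]; rewrite orbT.
by rewrite ys orbT.
Qed.

Lemma mem_subseqs1 a s : ([:: a] \in subseqs s) = (a \in s).
Proof.
elim: s => //= x s IH; rewrite mem_cat inE IH.
apply/orP/orP => [[/mapP [u _ [-> _]]|]|[/eqP ->|]]; rewrite ?eqxx; auto.
by left; apply/mapP; exists [::]; rewrite ?mem_subseqs_nil.
Qed.

Lemma mem_subseqs_pair a s : ([:: a; a] \in subseqs s) = (1 < count_mem a s).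
Proof.
elim: s => //= x s IH; rewrite mem_cat IH.
case: (eqVneq x a) => [<-|xa] /=; last first.
  rewrite add0n orb_idl // => /mapP [u _ [ax _]].
  by rewrite ax eqxx in xa.
rewrite add1n ltnS -has_count has_pred1 -mem_subseqs1; apply/orP/idP => [[/mapP [u u_s [->]] //|]|x_s].
  by move/ltnW; rewrite -has_count has_pred1 -mem_subseqs1.
by left; apply/mapP; exists [:: x].
Qed.

Lemma ltn_bigmax_seq (P : pred nat) r v :
  (v < \max_(x <- r | P x) x) = has (fun a => P a && (v < a)) r.
Proof.
elim: r => [|x r IH]; first by rewrite big_nil.
by rewrite big_cons /=; case: (P x) => //=; rewrite leq_max IH.
Qed.

Definition max_repeated (s : seq nat) := \max_(x <- s | 1 < count_mem x s) x.

Section AppendPeak.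

Variables (s : seq nat) (M v : nat).
Hypothesis s_lt_M : maxs s < M.

Let lt_M a : a \in s -> a < M.
Proof. by move/leq_maxs/leq_ltn_trans; apply. Qed.

Lemma contains_010_append_peak :
  avoids s [:: 0; 1; 0] -> contains (s ++ [:: M; v]) [:: 0; 1; 0] = (v \in s).
Proof.
move=> /negbTE s010; apply/hasP/idP => [[_ /mem_subseqs_cat [t [u [t_s u_Mv ->]]]]|v_s]; last first.
  exists [:: v; M; v]; last by rewrite order_iso_010 eqxx lt_M.
  by apply/mem_subseqs_cat; exists [:: v], [:: M; v]; rewrite mem_subseqs1 v_s /= !inE eqxx.
have t_in_s := mem_subseqs_sub t_s.
move: u_Mv; rewrite /= !inE => /or4P [] /eqP -> iso;
  last by move/hasPn: s010 => /(_ _ t_s); rewrite -(cats0 t) iso.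
all: have := order_iso_size iso; rewrite size_cat /= ?addn2 ?addn1 => /eqP.
all: case: t t_s t_in_s iso => [|a [|b [|c t]]] //= t_s t_in_s; rewrite order_iso_010 => /andP [/eqP].
- by move=> <- _ _; rewrite t_in_s ?mem_head.
- by move=> aM; have := lt_M (t_in_s a (mem_head _ _)); rewrite aM ltnn.
- by move=> <- _ _; rewrite t_in_s ?mem_head.
Qed.

Lemma contains_110_append_peak :
  avoids s [:: 1; 1; 0] -> contains (s ++ [:: M; v]) [:: 1; 1; 0] = (v < max_repeated s).
Proof.
move=> /negbTE s110; rewrite ltn_bigmax_seq.
apply/hasP/hasP => [[_ /mem_subseqs_cat [t [u [t_s u_Mv ->]]]]|[a a_s /andP [a_rep v_a]]]; last first.
  exists [:: a; a; v]; last by rewrite order_iso_110 eqxx.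
  by apply/mem_subseqs_cat; exists [:: a; a], [:: v]; rewrite mem_subseqs_pair a_rep /= !inE eqxx !orbT.
have t_in_s := mem_subseqs_sub t_s.
move: u_Mv; rewrite /= !inE => /or4P [] /eqP -> iso;
  last by move/hasPn: s110 => /(_ _ t_s); rewrite -(cats0 t) iso.
all: have := order_iso_size iso; rewrite size_cat /= ?addn2 ?addn1 => /eqP.
all: case: t t_s t_in_s iso => [|a [|b [|c t]]] //= t_s t_in_s; rewrite order_iso_110 => /andP [/eqP].
- by move=> aM; have := lt_M (t_in_s a (mem_head _ _)); rewrite aM ltnn.
- by move=> _ Ma; have := lt_M (t_in_s a (mem_head _ _)); rewrite ltnNge ltnW.
- move=> ab v_a _; subst b; exists a; first by rewrite t_in_s ?mem_head.
  by rewrite -mem_subseqs_pair t_s.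
Qed.

End AppendPeak.

Lemma count_iota_mem_or_lt s q : q <= maxs s ->
  count (fun v => (v \in s) || (v < q)) (iota 0 (maxs s).+1)
  = q + size [seq x <- undup s | q <= x].
Proof.
move=> q_le; rewrite -(subnKC (leqW q_le)) iotaD count_cat add0n.
congr (_ + _).
  rewrite (eq_in_count (a2 := predT)) ?count_predT ?size_iota // => x.
  by rewrite mem_iota => /andP [_ ->]; rewrite orbT.
rewrite (eq_in_count (a2 := mem s)); last first.
  by move=> x; rewrite mem_iota => /andP [q_x _]; rewrite ltnNge q_x orbF.
rewrite -size_filter; apply: perm_size; apply: uniq_perm.
- exact/filter_uniq/iota_uniq.
- exact/filter_uniq/undup_uniq.
move=> x; rewrite !mem_filter mem_iota mem_undup subnKC ?(leqW q_le) //.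
apply/and3P/andP => [[? _ ?] //|[q_x x_s]].
by rewrite q_x ltnS leq_maxs.
Qed.

Theorem mainTheorem11 (s : seq nat) :
  s != [::] ->
  avoids s [:: 0; 1; 0] ->
  avoids s [:: 1; 1; 0] ->
  let q := \max_(x <- s | 1 < count_mem x s) x in
  let r := size [seq x <- undup s | q <= x] in
  forb s [:: [:: 0; 1; 0]; [:: 1; 1; 0]] = q + r.
Proof.
move=> _ s010 s110 q r.
have forbiddenE v : forbidden [:: [:: 0; 1; 0]; [:: 1; 1; 0]] s v = (v \in s) || (v < q).
  rewrite /forbidden /= orbF -!cats1 -catA.
  by rewrite contains_010_append_peak ?contains_110_append_peak.
rewrite /forb (eq_count forbiddenE) count_iota_mem_or_lt //.
by apply/bigmax_leqP_seq => x x_s _; apply: leq_maxs.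
Qed.
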